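(* Let $\tau>\tau_0>0$, $\gamma>0$, $f:[0,\infty)\to[0,\infty)$ continuous, and $\mathcal D,T$ as in the context. Then for every $u\in\mathcal D$, the function $t\mapsto(Tu)(t)$ is continuously differentiable on $[-\tau,0]$ (with one-sided derivatives at the endpoints).
   Context: For $u\in C([-\tau,0],[0,\infty))$ let $H_0(u)=u(0)-\int_{\tau_0}^{\tau}f(u(-a))e^{-\gamma(a-\tau_0)}da$, and $\mathcal D=\{u\in C([-\tau,0],[0,\infty)) : H_0(u)\ge0\}$. For $u\in\mathcal D$ define $Tu\in C([-\tau,0],[0,\infty))$ by $$(Tu)(t)=e^{-\gamma(t+\tau)}H_0(u)+\int_{\tau_0}^{\tau}f(u(t+\tau-a))e^{-\gamma(a-\tau_0)}da,\quad t\in[-\tau,\tau_0-\tau],$$ $$(Tu)(t)=e^{-\gamma(t+\tau)}H_0(u)+\int_{\tau_0}^{t+\tau}f((Tu)(t-a))e^{-\gamma(a-\tau_0)}da+\int_{t+\tau}^{\tau}f(u(t+\tau-a))e^{-\gamma(a-\tau_0)}da,\quad t\in(\tau_0-\tau,0]$$ (the second formula determines $Tu$ successively, since it only uses values of $Tu$ at points $t-a\le t-\tau_0$). *)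

From Stdlib Require Import Reals Lra ClassicalEpsilon.
Open Scope R_scope.

(* Total Riemann integral: the Stdlib Riemann integral when [f] is
   Riemann-integrable on [a,b] (value independent of the proof, RiemannInt_P5),
   and 0 otherwise. Only used for integrands that are continuous. *)
Definition RInt (f : R -> R) (a b : R) : R :=
  match excluded_middle_informative (inhabited (Riemann_integrable f a b)) with
  | left H => RiemannInt (epsilon H (fun _ => True))
  | right _ => 0
  end.

Definition cont_on (D : R -> Prop) (f : R -> R) : Prop :=
  forall x, D x -> forall eps, 0 < eps -> exists delta, 0 < delta /\
    forall y, D y -> Rabs (y - x) < delta -> Rabs (f y - f x) < eps.

(* g is the derivative of f on D, relative to D (one-sided at endpoints of an interval) *)
Definition deriv_on (D : R -> Prop) (f g : R -> R) : Prop :=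
  forall x, D x -> forall eps, 0 < eps -> exists delta, 0 < delta /\
    forall h, h <> 0 -> D (x + h) -> Rabs h < delta ->
      Rabs ((f (x + h) - f x) / h - g x) < eps.

Definition C1_on (D : R -> Prop) (f : R -> R) : Prop :=
  exists g, deriv_on D f g /\ cont_on D g.

Definition Icc (a b : R) (x : R) : Prop := a <= x <= b.
Definition Ici0 (x : R) : Prop := 0 <= x.

Definition H0 (f : R -> R) (gamma tau0 tau : R) (u : R -> R) : R :=
  u 0 - RInt (fun a => f (u (- a)) * exp (- gamma * (a - tau0))) tau0 tau.

Definition is_Tu (f : R -> R) (gamma tau0 tau : R) (u v : R -> R) : Prop :=
  (forall t, - tau <= t <= tau0 - tau ->
     v t = exp (- gamma * (t + tau)) * H0 f gamma tau0 tau u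
           + RInt (fun a => f (u (t + tau - a)) * exp (- gamma * (a - tau0))) tau0 tau)
  /\
  (forall t, tau0 - tau < t <= 0 ->
     v t = exp (- gamma * (t + tau)) * H0 f gamma tau0 tau u
           + RInt (fun a => f (v (t - a)) * exp (- gamma * (a - tau0))) tau0 (t + tau)
           + RInt (fun a => f (u (t + tau - a)) * exp (- gamma * (a - tau0))) (t + tau) tau).

(* Glue u (shifted by -tau) and v = T u into one continuous history
   w on R: w = u(. + tau) on [-2 tau, -tau], w = v on [-tau, 0], constant
   outside; the gluing is continuous because v(-tau) = u(0), which is exactly
   the role of H_0(u). With w, both defining equations of T u collapse into the
   single delay formula
       v t = e^{-gamma (t + tau)} H_0(u) + int_tau0^tau f(w(t - a)) e^{-gamma (a - tau0)} da
   on [-tau, 0]. The substitution s = t - a turns the integral into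
   e^{-gamma (t - tau0)} int_{t - tau}^{t - tau0} f(w s) e^{gamma s} ds, which is
   C^1 on all of R by the fundamental theorem of calculus; restricting it to
   [-tau, 0] gives the theorem. *)
From Pilot Require Import Defs.
From Stdlib Require Import Reals Lra ClassicalEpsilon FunctionalExtensionality.
From Coquelicot Require Import Coquelicot.
Open Scope R_scope.

Lemma continuous_of_eps (g : R -> R) x :
  (forall eps, 0 < eps -> exists delta, 0 < delta /\
     forall y, Rabs (y - x) < delta -> Rabs (g y - g x) < eps) -> continuous g x.
Proof.
  intros H. apply continuity_pt_filterlim.
  intros eps Heps. destruct (H eps Heps) as [d [Hd Hy]].
  exists d. split; auto. intros y [_ Hy']. apply Hy. exact Hy'.
Qed.

Lemma eps_of_continuous (g : R -> R) x : continuous g x ->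
  forall eps, 0 < eps -> exists delta, 0 < delta /\
     forall y, Rabs (y - x) < delta -> Rabs (g y - g x) < eps.
Proof.
  intros H. apply continuity_pt_filterlim in H.
  intros eps Heps. destruct (H eps Heps) as [d [Hd Hy]].
  exists d. split; auto. intros y Hy'.
  destruct (Req_dec y x) as [->|Hne].
  - unfold Rminus; rewrite Rplus_opp_r, Rabs_R0; auto.
  - apply Hy. split; [split; [exact I| auto] | exact Hy'].
Qed.

Definition C1 (F : R -> R) : Prop :=
  exists dF, forall x, is_derive F x (dF x) /\ continuous dF x.

Lemma C1_ext (F G : R -> R) : C1 F -> (forall x, F x = G x) -> C1 G.
Proof.
  intros [dF HF] HFG. exists dF. intros x. destruct (HF x) as [Hd Hc].
  split; [apply (is_derive_ext F) |]; auto.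
Qed.

Lemma C1_const (c : R) : C1 (fun _ => c).
Proof. exists (fun _ => 0). intros x. split; [apply (is_derive_const c) | apply continuous_const]. Qed.

Lemma C1_id : C1 (fun x => x).
Proof. exists (fun _ => 1). intros x. split; [apply (is_derive_id (K := R_AbsRing)) | apply continuous_const]. Qed.

Lemma C1_exp : C1 exp.
Proof. exists exp. intros x. split; [apply is_derive_exp | apply continuous_exp]. Qed.

Lemma C1_plus (F G : R -> R) : C1 F -> C1 G -> C1 (fun x => F x + G x).
Proof.
  intros [dF HF] [dG HG]. exists (fun x => dF x + dG x). intros x.
  destruct (HF x), (HG x). split.
  - apply (is_derive_plus F G); auto.
  - apply (continuous_plus dF dG); auto.
Qed.

Lemma C1_minus (F G : R -> R) : C1 F -> C1 G -> C1 (fun x => F x - G x).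
Proof.
  intros [dF HF] [dG HG]. exists (fun x => dF x - dG x). intros x.
  destruct (HF x), (HG x). split.
  - apply (is_derive_minus F G); auto.
  - apply (continuous_minus dF dG); auto.
Qed.

Lemma C1_mult (F G : R -> R) : C1 F -> C1 G -> C1 (fun x => F x * G x).
Proof.
  intros [dF HF] [dG HG]. exists (fun x => dF x * G x + F x * dG x). intros x.
  destruct (HF x) as [DF CF], (HG x) as [DG CG].
  assert (cF : continuous F x) by (apply (ex_derive_continuous (K := R_AbsRing) (V := R_NormedModule)); eexists; eauto).
  assert (cG : continuous G x) by (apply (ex_derive_continuous (K := R_AbsRing) (V := R_NormedModule)); eexists; eauto).
  split.
  - apply (is_derive_mult F G); auto. intros; apply Rmult_comm.
  - apply (continuous_plus (fun x => dF x * G x) (fun x => F x * dG x));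
      apply (continuous_mult (K := R_AbsRing)); auto.
Qed.

Lemma C1_comp (F G : R -> R) : C1 F -> C1 G -> C1 (fun x => F (G x)).
Proof.
  intros [dF HF] [dG HG]. exists (fun x => dG x * dF (G x)). intros x.
  destruct (HF (G x)) as [DF CF], (HG x) as [DG CG].
  assert (cG : continuous G x) by (apply (ex_derive_continuous (K := R_AbsRing) (V := R_NormedModule)); eexists; eauto).
  split.
  - apply (is_derive_comp F G); auto.
  - apply (continuous_mult (K := R_AbsRing) dG (fun x => dF (G x))); auto.
    apply (continuous_comp G dF); auto.
Qed.

Lemma C1_RInt_bounds (G A B : R -> R) :
  (forall x, continuous G x) -> C1 A -> C1 B -> C1 (fun t => RInt G (A t) (B t)).
Proof.
  intros HG HA HB.
  assert (ex : forall a b, ex_RInt G a b)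
    by (intros; apply (ex_RInt_continuous (V := R_CompleteNormedModule)); auto).
  assert (prim : C1 (fun x => RInt G 0 x)).
  { exists G. intros x. split; auto.
    apply is_derive_RInt with 0; auto.
    apply filter_forall. intros y. apply (RInt_correct (V := R_CompleteNormedModule)), ex. }
  apply (C1_ext (fun t => RInt G 0 (B t) - RInt G 0 (A t))).
  - apply C1_minus; apply (C1_comp (fun x => RInt G 0 x)); auto.
  - intros t. rewrite <- (RInt_Chasles G 0 (A t) (B t)) by apply ex.
    unfold plus; simpl. ring.
Qed.

Lemma C1_on_of_C1 (D : R -> Prop) (V v : R -> R) :
  C1 V -> (forall x, D x -> v x = V x) -> C1_on D v.
Proof.
  intros [dV HV] Hv. exists dV. split.
  - intros x Dx eps Heps.
    destruct (HV x) as [Hd _]. apply is_derive_Reals in Hd.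
    destruct (Hd eps Heps) as [d Hdd].
    exists d; split; [apply cond_pos |]. intros h Hh Dxh Hl.
    rewrite (Hv x Dx), (Hv (x + h) Dxh). apply Hdd; auto.
  - intros x _ eps Heps. destruct (HV x) as [_ Hc].
    destruct (eps_of_continuous _ _ Hc eps Heps) as [d [Hd0 Hd]].
    exists d; split; auto.
Qed.

Lemma Defs_RInt_eq (g G : R -> R) a b : a <= b ->
  (forall x, a <= x <= b -> g x = G x) -> (forall x, continuous G x) ->
  Defs.RInt g a b = RInt G a b.
Proof.
  intros Hab Hag Hc.
  assert (exg : ex_RInt g a b).
  { apply (ex_RInt_ext G).
    - intros x Hx. rewrite Rmin_left, Rmax_right in Hx by lra. symmetry; apply Hag; lra.
    - apply (ex_RInt_continuous (V := R_CompleteNormedModule)); auto. }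
  unfold Defs.RInt. destruct excluded_middle_informative as [Hi|Hi].
  - rewrite <- RInt_Reals. apply RInt_ext. intros x Hx.
    rewrite Rmin_left, Rmax_right in Hx by lra. apply Hag; lra.
  - exfalso; apply Hi; exact (inhabits (ex_RInt_Reals_0 _ _ _ exg)).
Qed.

Lemma delay_integral_subst (F : R -> R) gam tau0 c p q :
  (forall x, continuous F x) ->
  RInt (fun a => F (c - a) * exp (- gam * (a - tau0))) p q =
  exp (- gam * (c - tau0)) * RInt (fun s => F s * exp (gam * s)) (c - q) (c - p).
Proof.
  intros HF. set (G := fun s => F s * exp (gam * s)).
  assert (ex : forall a b, ex_RInt G a b).
  { intros; apply (ex_RInt_continuous (V := R_CompleteNormedModule)); intros z _.
    apply (continuous_mult (K := R_AbsRing) F (fun s => exp (gam * s))); auto.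
    apply continuous_exp_comp, (continuous_mult (K := R_AbsRing) (fun _ => gam) (fun s => s)); [apply continuous_const | apply continuous_id]. }
  rewrite (RInt_ext _ (fun a => scal (- exp (- gam * (c - tau0)))
                                   (scal (-1) (G (-1 * a + c))))).
  2:{ intros a _. unfold scal; simpl; unfold mult; simpl. unfold G.
      replace (-1 * a + c) with (c - a) by ring.
      replace (- gam * (a - tau0)) with (- gam * (c - tau0) + gam * (c - a)) by ring.
      rewrite exp_plus. ring. }
  rewrite (RInt_scal (V := R_CompleteNormedModule))
    by (apply (ex_RInt_comp_lin G), ex).
  rewrite (RInt_comp_lin (V := R_CompleteNormedModule) G) by apply ex.
  rewrite <- (opp_RInt_swap G) by apply ex.
  unfold scal, opp; simpl; unfold mult; simpl.
  replace (-1 * p + c) with (c - p) by ring. replace (-1 * q + c) with (c - q) by ring.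
  ring.
Qed.

Lemma C1_delay_convolution (F : R -> R) gam tau0 tau :
  (forall x, continuous F x) ->
  C1 (fun t => RInt (fun a => F (t - a) * exp (- gam * (a - tau0))) tau0 tau).
Proof.
  intros HF.
  apply (C1_ext (fun t => exp (- gam * (t - tau0)) *
                          RInt (fun s => F s * exp (gam * s)) (t - tau) (t - tau0))).
  2: intros t; symmetry; apply delay_integral_subst; auto.
  assert (shift : forall c, C1 (fun t => t - c)) by (intros; apply C1_minus; [apply C1_id | apply C1_const]).
  apply C1_mult.
  - apply (C1_comp exp), (C1_mult (fun _ => - gam)); [apply C1_exp | apply C1_const | apply shift].
  - apply C1_RInt_bounds; try apply shift. intros x.
    apply (continuous_mult (K := R_AbsRing) F (fun s => exp (gam * s))); auto.
    apply continuous_exp_comp, (continuous_mult (K := R_AbsRing) (fun _ => gam) (fun s => s)); [apply continuous_const | apply continuous_id].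
Qed.

Lemma continuous_delay_integrand (F : R -> R) gam tau0 t :
  (forall x, continuous F x) ->
  forall a, continuous (fun a => F (t - a) * exp (- gam * (a - tau0))) a.
Proof.
  intros HF a.
  apply (continuous_mult (K := R_AbsRing) (fun a => F (t - a))).
  - apply (continuous_comp (fun a => t - a) F); auto.
    apply (continuous_minus (K := R_AbsRing) (V := R_NormedModule) (fun _ => t) (fun a => a));
      [apply continuous_const | apply continuous_id].
  - apply continuous_exp_comp, (continuous_mult (K := R_AbsRing) (fun _ => - gam)).
    + apply continuous_const.
    + apply (continuous_minus (K := R_AbsRing) (V := R_NormedModule) (fun a => a) (fun _ => tau0));
        [apply continuous_id | apply continuous_const].
Qed.

Definition clamp (a b x : R) : R := Rmax a (Rmin b x).

Lemma clamp_in a b x : a <= b -> a <= clamp a b x <= b.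
Proof. intros. unfold clamp, Rmax, Rmin; repeat destruct Rle_dec; lra. Qed.

Lemma clamp_id a b x : a <= x <= b -> clamp a b x = x.
Proof. intros. unfold clamp, Rmax, Rmin; repeat destruct Rle_dec; lra. Qed.

Lemma clamp_below a b x : a <= b -> x <= a -> clamp a b x = a.
Proof. intros. unfold clamp, Rmax, Rmin; repeat destruct Rle_dec; lra. Qed.

Lemma clamp_above a b x : a <= b -> b <= x -> clamp a b x = b.
Proof. intros. unfold clamp, Rmax, Rmin; repeat destruct Rle_dec; lra. Qed.

Lemma clamp_lipschitz a b x y : a <= b ->
  Rabs (clamp a b y - clamp a b x) <= Rabs (y - x).
Proof.
  intros. unfold clamp, Rmax, Rmin; repeat destruct Rle_dec;
    unfold Rabs; repeat destruct Rcase_abs; lra.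
Qed.

Lemma continuous_clamp_ext (w : R -> R) a b : a <= b -> cont_on (Icc a b) w ->
  forall x, continuous (fun x => w (clamp a b x)) x.
Proof.
  intros Hab Hw x. apply continuous_of_eps. intros eps Heps.
  destruct (Hw (clamp a b x) (clamp_in a b x Hab) eps Heps) as [d [Hd0 Hd]].
  exists d. split; auto. intros y Hy. apply Hd.
  - apply clamp_in; auto.
  - pose proof (clamp_lipschitz a b x y Hab). lra.
Qed.

Lemma continuous_comp_nonneg (f g : R -> R) : cont_on Ici0 f ->
  (forall x, 0 <= g x) -> (forall x, continuous g x) ->
  forall x, continuous (fun x => f (g x)) x.
Proof.
  intros Hf Hg0 Hg x. apply continuous_of_eps. intros eps Heps.
  destruct (Hf (g x) (Hg0 x) eps Heps) as [d1 [Hd1 H1]].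
  destruct (eps_of_continuous g x (Hg x) d1 Hd1) as [d2 [Hd2 H2]].
  exists d2. split; auto. intros y Hy. apply H1; [apply Hg0 | apply H2; auto].
Qed.

(* The full history seen by T u: u shifted to [-2 tau, -tau] followed by v on
   [-tau, 0], extended by constants outside [-2 tau, 0]. It is continuous
   precisely because v (- tau) = u 0. *)
Definition history (tau : R) (u v : R -> R) (s : R) : R :=
  u (clamp (- tau) 0 (s + tau)) + v (clamp (- tau) 0 s) - u 0.

Section Delay_form.

Variables (tau tau0 gamma : R) (f u v : R -> R).
Hypotheses (Htau0 : 0 < tau0) (Htau : tau0 < tau).
Hypotheses (Hf_cont : cont_on Ici0 f)
  (Hu_cont : cont_on (Icc (- tau) 0) u) (Hv_cont : cont_on (Icc (- tau) 0) v)
  (Hu_pos : forall t, - tau <= t <= 0 -> 0 <= u t)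
  (Hv_pos : forall t, - tau <= t <= 0 -> 0 <= v t)
  (HvT : is_Tu f gamma tau0 tau u v).

(* T u starts where u ends: this is what H_0(u) is designed for. *)
Lemma Tu_start : v (- tau) = u 0.
Proof.
  destruct HvT as [HT1 _]. rewrite (HT1 (- tau)) by lra. unfold H0.
  replace (- tau + tau) with 0 by ring. rewrite Rmult_0_r, exp_0.
  replace (fun a => f (u (0 - a)) * exp (- gamma * (a - tau0)))
    with (fun a => f (u (- a)) * exp (- gamma * (a - tau0))).
  - ring.
  - apply functional_extensionality; intros a. now rewrite Rminus_0_l.
Qed.

Lemma history_past s : - tau <= s + tau <= 0 -> history tau u v s = u (s + tau).
Proof.
  intros Hs. unfold history.
  rewrite clamp_id, (clamp_below (- tau) 0 s), Tu_start by lra. ring.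
Qed.

Lemma history_present s : - tau <= s <= 0 -> history tau u v s = v s.
Proof.
  intros Hs. unfold history.
  rewrite (clamp_above (- tau) 0 (s + tau)), (clamp_id (- tau) 0 s) by lra. ring.
Qed.

Lemma history_nonneg s : 0 <= history tau u v s.
Proof.
  unfold history. destruct (Rle_dec s (- tau)) as [Hs|Hs].
  - rewrite (clamp_below (- tau) 0 s), Tu_start by lra.
    assert (0 <= u (clamp (- tau) 0 (s + tau))) by (apply Hu_pos, clamp_in; lra). lra.
  - rewrite (clamp_above (- tau) 0 (s + tau)) by lra.
    assert (0 <= v (clamp (- tau) 0 s)) by (apply Hv_pos, clamp_in; lra). lra.
Qed.

Lemma continuous_f_history s : continuous (fun s => f (history tau u v s)) s.
Proof.
  revert s. apply continuous_comp_nonneg; [exact Hf_cont | exact history_nonneg |].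
  intros s. unfold history.
  apply (continuous_minus (K := R_AbsRing) (V := R_NormedModule) _ (fun _ => u 0));
    [| apply continuous_const].
  apply (continuous_plus (K := R_AbsRing) (V := R_NormedModule)).
  - apply (continuous_comp (fun s => s + tau) (fun x => u (clamp (- tau) 0 x))).
    + apply (continuous_plus (K := R_AbsRing) (V := R_NormedModule) (fun s => s) (fun _ => tau));
        [apply continuous_id | apply continuous_const].
    + apply continuous_clamp_ext; auto; lra.
  - apply continuous_clamp_ext; auto; lra.
Qed.

Lemma Tu_delay_form t : - tau <= t <= 0 ->
  v t = exp (- gamma * (t + tau)) * H0 f gamma tau0 tau u
        + RInt (fun a => f (history tau u v (t - a)) * exp (- gamma * (a - tau0))) tau0 tau.
Proof.
  intros Ht. destruct HvT as [HT1 HT2].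
  set (G := fun a => f (history tau u v (t - a)) * exp (- gamma * (a - tau0))).
  assert (cG : forall a, continuous G a)
    by (apply (continuous_delay_integrand (fun s => f (history tau u v s))), continuous_f_history).
  assert (past : forall a, - tau <= t - a + tau <= 0 ->
            f (u (t + tau - a)) * exp (- gamma * (a - tau0)) = G a).
  { intros a Ha. unfold G. rewrite history_past by lra. do 3 f_equal. ring. }
  assert (present : forall a, - tau <= t - a <= 0 ->
            f (v (t - a)) * exp (- gamma * (a - tau0)) = G a).
  { intros a Ha. unfold G. now rewrite history_present. }
  destruct (Rle_dec t (tau0 - tau)) as [Hle|Hgt].
  - rewrite HT1 by lra. f_equal.
    apply Defs_RInt_eq; auto; [lra | intros a Ha; apply past; lra].
  - rewrite HT2 by lra. rewrite Rplus_assoc. f_equal.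
    rewrite (Defs_RInt_eq _ G tau0 (t + tau)); [| lra | intros a Ha; apply present; lra | exact cG].
    rewrite (Defs_RInt_eq _ G (t + tau) tau); [| lra | intros a Ha; apply past; lra | exact cG].
    assert (ex : forall a b, ex_RInt G a b)
      by (intros; apply (ex_RInt_continuous (V := R_CompleteNormedModule)); auto).
    exact (RInt_Chasles G tau0 (t + tau) tau (ex _ _) (ex _ _)).
Qed.

End Delay_form.

Theorem lemma4 (tau tau0 gamma : R) (f u v : R -> R)
  (Htau0 : 0 < tau0) (Htau : tau0 < tau) (Hgamma : 0 < gamma)
  (Hf_cont : cont_on Ici0 f) (Hf_pos : forall x, 0 <= x -> 0 <= f x)
  (Hu_cont : cont_on (Icc (- tau) 0) u)
  (Hu_pos : forall t, - tau <= t <= 0 -> 0 <= u t)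
  (HuD : 0 <= H0 f gamma tau0 tau u)
  (Hv_cont : cont_on (Icc (- tau) 0) v)
  (Hv_pos : forall t, - tau <= t <= 0 -> 0 <= v t)
  (HvT : is_Tu f gamma tau0 tau u v) :
  C1_on (Icc (- tau) 0) v.
Proof.
  apply (C1_on_of_C1 _ (fun t => exp (- gamma * (t + tau)) * H0 f gamma tau0 tau u
    + RInt (fun a => f (history tau u v (t - a)) * exp (- gamma * (a - tau0))) tau0 tau)).
  - apply C1_plus.
    + apply C1_mult; [| apply C1_const].
      apply (C1_comp exp), (C1_mult (fun _ => - gamma)); [apply C1_exp | apply C1_const |].
      apply C1_plus; [apply C1_id | apply C1_const].
    + apply (C1_delay_convolution (fun s => f (history tau u v s))).
      apply (continuous_f_history tau tau0 gamma); auto.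
  - intros t Ht. apply (Tu_delay_form tau tau0 gamma); auto.
Qed.
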